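(* Let $\Gamma$ be a connected amply regular graph with diameter $d=5$ and parameters $(v,k,\lambda,\mu)$, where $\mu=\frac{k-1}{2}$ and $k\ge5$ is odd. Then $\Gamma$ is the $5$-cube.
   Context: An amply regular graph with parameters $(v,k,\lambda,\mu)$ is a $k$-regular graph on $v$ vertices in which any two adjacent vertices have exactly $\lambda$ common neighbours and any two vertices at distance $2$ have exactly $\mu$ common neighbours. *)

From mathcomp Require Import all_boot.
Set Implicit Arguments. Unset Strict Implicit. Unset Printing Implicit Defensive.

Definition simple_graph (T : finType) (e : rel T) : Prop :=
  symmetric e /\ irreflexive e.

Definition common_nbrs (T : finType) (e : rel T) (x y : T) : {set T} :=
  [set z | e x z && e y z].

Definition is_dist (T : finType) (e : rel T) (x y : T) (n : nat) : Prop :=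
  (exists p : seq T, [/\ path e x p, last x p = y & size p = n]) /\
  (forall p : seq T, path e x p -> last x p = y -> n <= size p).

Definition connected_graph (T : finType) (e : rel T) : Prop :=
  forall x y : T, connect e x y.

Definition has_diameter (T : finType) (e : rel T) (d : nat) : Prop :=
  (forall x y n, is_dist e x y n -> n <= d) /\ exists x y, is_dist e x y d.

Definition amply_regular (T : finType) (e : rel T) (v k lam mu : nat) : Prop :=
  [/\ #|T| = v,
      forall x : T, #|[set y | e x y]| = k,
      forall x y : T, e x y -> #|common_nbrs e x y| = lam &
      forall x y : T, is_dist e x y 2 -> #|common_nbrs e x y| = mu].

Definition cube_vertex (n : nat) := {ffun 'I_n -> bool}.
Definition cube_adj (n : nat) : rel (cube_vertex n) :=
  fun u w => #|[set i | u i != w i]| == 1.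

Definition graph_iso (T T' : finType) (e : rel T) (e' : rel T') : Prop :=
  exists f : T -> T', bijective f /\ forall x y, e' (f x) (f y) = e x y.

(* Fix p and call c(y) the number of neighbours of y closer to p.  Double
   counting shows that c strictly increases along geodesics from distance 2 on,
   so c(y) >= mu + d(p, y) - 2.  At distance 4 from p next to a vertex at
   distance 5, a divisibility argument even gives c >= 2 mu; this leaves no
   room for triangles (lam = 0), and counting common neighbours around two
   neighbours of the far vertex rules out mu >= 3.  With mu = 2 and k = 5 every
   y has exactly d(p, y) closer and 5 - d(p, y) farther neighbours, so the
   spheres around p have sizes binomial(5, i) and there are 32 vertices.
   Labelling y by the neighbours of a fixed vertex x0 that lie on geodesics
   from x0 to y is then injective, and y ~ y' iff the labels differ in exactly
   one element: the graph is the 5-cube. *)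

From mathcomp Require Import all_boot zify.
Set Implicit Arguments. Unset Strict Implicit. Unset Printing Implicit Defensive.

Section Counting.
Variable T : finType.
Implicit Types (A B S : {set T}).

Lemma double_count A B (r : rel T) :
  \sum_(a in A) #|[set b in B | r a b]| = \sum_(b in B) #|[set a in A | r a b]|.
Proof.
have card_sep (X : {set T}) (P : pred T) : #|[set b in X | P b]| = \sum_(b in X) P b.
  rewrite -sum1_card big_mkcond [RHS]big_mkcond; apply: eq_bigr => i _.
  by rewrite inE; case: (i \in X); case: (P i).
under eq_bigr => a _ do rewrite card_sep.
under [RHS]eq_bigr => b _ do rewrite card_sep.
exact: exchange_big.
Qed.

Lemma eq_sum_nat_const A (F : T -> nat) c :
  {in A, forall a, F a = c} -> \sum_(a in A) F a = #|A| * c.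
Proof. by move=> FA; rewrite -sum_nat_const; apply: eq_bigr. Qed.

Lemma leq_sum_nat_const A (F : T -> nat) c :
  {in A, forall a, F a <= c} -> \sum_(a in A) F a <= #|A| * c.
Proof. by move=> FA; rewrite -sum_nat_const; apply: leq_sum. Qed.

Lemma geq_sum_nat_const A (F : T -> nat) c :
  {in A, forall a, c <= F a} -> #|A| * c <= \sum_(a in A) F a.
Proof. by move=> FA; rewrite -sum_nat_const; apply: leq_sum. Qed.

Lemma cardsU_disjoint A B : {in A, forall u, u \notin B} -> #|A :|: B| = #|A| + #|B|.
Proof.
move=> AB; rewrite cardsU; suff -> : A :&: B = set0 by rewrite cards0 subn0.
by apply/setP => u; rewrite !inE; case: (boolP (u \in A)) => // /AB /negbTE.
Qed.

Lemma card_disjoint_leq A B S :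
  A \subset S -> B \subset S -> {in A, forall u, u \notin B} -> #|A| + #|B| <= #|S|.
Proof.
by move=> AS BS AB; rewrite -cardsU_disjoint //; apply: subset_leq_card; rewrite subUset AS.
Qed.

Lemma mem_disjoint_cover A B S u :
  A \subset S -> B \subset S -> {in A, forall u, u \notin B} ->
  #|S| <= #|A| + #|B| -> u \in S -> (u \in A) || (u \in B).
Proof.
move=> AS BS AB cardS; suff <- : A :|: B = S by rewrite inE.
by apply/eqP; rewrite eqEcard subUset AS BS cardsU_disjoint.
Qed.

Lemma subset_cardS A B :
  A \subset B -> #|B| = #|A|.+1 -> exists2 a, a \notin A & B = a |: A.
Proof.
move=> AB cardB; have : #|B :\: A| == 1 by rewrite cardsDS // cardB subSnn.
case/cards1P => a BA; have : a \in B :\: A by rewrite BA set11.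
rewrite inE => /andP [aA aB]; exists a => //.
apply/setP => w; rewrite in_setU1.
case: (boolP (w \in A)) => [wA|wA]; first by rewrite orbT (subsetP AB).
rewrite orbF; apply/idP/eqP => [wB|-> //].
by apply/set1P; rewrite -BA inE wA.
Qed.

End Counting.

Lemma imset_eq_card (aT rT : finType) (g : aT -> rT) (A : {set aT}) (D : {set rT}) :
  {in A &, injective g} -> g @: A \subset D -> #|D| <= #|A| -> g @: A = D.
Proof. by move=> g_inj gAD cardD; apply/eqP; rewrite eqEcard gAD card_in_imset. Qed.

Lemma graph_iso_cube (T : finType) (e : rel T) (S : {set T}) (label : T -> {set T}) :
  (forall y, label y \subset S) -> injective label -> #|T| = 2 ^ #|S| ->
  (forall y y', e y y' = (#|(label y :\: label y') :|: (label y' :\: label y)| == 1)) ->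
  graph_iso e (@cube_adj #|S|).
Proof.
move=> labelS label_inj cardT adjE.
pose f y : cube_vertex #|S| := [ffun i => enum_val i \in label y].
have card_diff y y' : #|[set i | f y i != f y' i]| =
    #|(label y :\: label y') :|: (label y' :\: label y)|.
  rewrite -(card_imset _ enum_val_inj); apply: eq_card => a.
  case: (boolP (a \in S)) => aS.
    rewrite -(enum_rankK_in aS aS) mem_imset ?inE ?ffunE; last exact: enum_val_inj.
    by case: (_ \in label y); case: (_ \in label y').
  apply/imsetP/idP => [[i _ ai]|]; first by move: aS; rewrite ai enum_valP.
  by rewrite !inE => /orP [] /andP [_ /(subsetP (labelS _))]; rewrite (negbTE aS).
have f_inj : injective f.
  move=> y y' fyy'; apply: label_inj; move: (card_diff y y').
  have -> : [set i | f y i != f y' i] = set0 by apply/setP => i; rewrite fyy' !inE eqxx.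
  move/esym/eqP; rewrite cards0 cards_eq0 => /eqP diff0.
  by apply/eqP; rewrite eqEsubset -!setD_eq0 -!subset0 -diff0 ?subsetUl ?subsetUr.
exists f; split.
  by apply: inj_card_bij f_inj _; rewrite card_ffun card_bool card_ord cardT.
by move=> y y'; rewrite /cube_adj card_diff adjE.
Qed.

Section Graph.
Variables (T : finType) (e : rel T).
Hypotheses (e_sym : symmetric e) (e_irr : irreflexive e).

Fixpoint walk_ends (n : nat) (x : T) : {set T} :=
  if n is n'.+1 then [set y | [exists w in walk_ends n' x, e w y]] else [set x].

Lemma walk_endsS n x y : (y \in walk_ends n.+1 x) = [exists w in walk_ends n x, e w y].
Proof. by rewrite /= inE. Qed.

Lemma walk_endsP n x y : y \in walk_ends n x <->
  exists p : seq T, [/\ path e x p, last x p = y & size p = n].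
Proof.
split.
  elim: n y => [|n IH] y; first by rewrite inE => /eqP ->; exists [::].
  rewrite walk_endsS => /existsP [w /andP [/IH [p [p_path p_last p_size]] ewy]].
  exists (rcons p y).
  by rewrite rcons_path last_rcons size_rcons p_path p_last p_size ewy.
case=> p []; elim/last_ind: p n y => [|p a IH] n y; first by move=> _ /= <- <-; rewrite inE.
rewrite rcons_path last_rcons size_rcons => /andP [p_path ea] <- <-.
rewrite walk_endsS; apply/existsP; exists (last x p); rewrite ea andbT.
exact: IH.
Qed.

Lemma walk_ends_cat a b x y z :
  y \in walk_ends a x -> z \in walk_ends b y -> z \in walk_ends (a + b) x.
Proof.
move=> y_end; elim: b z => [|b IH] z; first by rewrite inE addn0 => /eqP ->.
rewrite addnS !walk_endsS => /existsP [w /andP [w_end ewz]].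
by apply/existsP; exists w; rewrite IH.
Qed.

Lemma walk_ends1 x y : (y \in walk_ends 1 x) = e x y.
Proof.
rewrite walk_endsS; apply/existsP/idP => [[w /andP []]|exy].
  by rewrite inE => /eqP ->.
by exists x; rewrite inE eqxx.
Qed.

Lemma walk_ends_sym n x y : y \in walk_ends n x -> x \in walk_ends n y.
Proof.
elim: n y => [|n IH] y; first by rewrite !inE => /eqP ->.
rewrite walk_endsS => /existsP [w /andP [w_end ewy]].
have w_end1 : w \in walk_ends 1 y by rewrite walk_ends1 e_sym.
by rewrite -add1n; apply: walk_ends_cat w_end1 (IH _ w_end).
Qed.

Hypothesis e_conn : connected_graph e.

Lemma exists_walk_ends x y : exists n, y \in walk_ends n x.
Proof.
have /connectP [p p_path p_last] := e_conn x y.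
by exists (size p); apply/walk_endsP; exists p.
Qed.

Definition dist x y := ex_minn (exists_walk_ends x y).

Lemma dist_walk_ends x y : y \in walk_ends (dist x y) x.
Proof. by rewrite /dist; case: ex_minnP. Qed.

Lemma dist_min x y n : y \in walk_ends n x -> dist x y <= n.
Proof. by rewrite /dist; case: ex_minnP => m _ m_min /m_min. Qed.

Lemma is_distE x y n : is_dist e x y n <-> dist x y = n.
Proof.
split.
  case=> [[p [p_path p_last p_size]] n_min].
  apply/eqP; rewrite eqn_leq dist_min /=; last by apply/walk_endsP; exists p.
  by have /walk_endsP [q [q_path q_last <-]] := dist_walk_ends x y; apply: n_min.
move=> <-; split; first exact/walk_endsP/dist_walk_ends.
by move=> p p_path p_last; apply: dist_min; apply/walk_endsP; exists p.
Qed.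

Lemma dist_triangle x y z : dist x z <= dist x y + dist y z.
Proof. exact/dist_min/(walk_ends_cat (dist_walk_ends x y) (dist_walk_ends y z)). Qed.

Lemma distC x y : dist x y = dist y x.
Proof.
by apply/eqP; rewrite eqn_leq !dist_min // walk_ends_sym // dist_walk_ends.
Qed.

Lemma distxx x : dist x x = 0.
Proof. by apply/eqP; rewrite -leqn0 dist_min // inE. Qed.

Lemma dist_eq0 x y : (dist x y == 0) = (x == y).
Proof.
apply/idP/idP => [/eqP dxy|/eqP ->]; last by rewrite distxx.
by have := dist_walk_ends x y; rewrite dxy inE eq_sym.
Qed.

Lemma dist_eq1 x y : (dist x y == 1) = e x y.
Proof.
apply/idP/idP => [/eqP dxy|exy]; first by have := dist_walk_ends x y; rewrite dxy walk_ends1.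
have : dist x y <= 1 by rewrite dist_min // walk_ends1.
suff : dist x y != 0 by lia.
by rewrite dist_eq0; apply: contraTneq exy => ->; rewrite e_irr.
Qed.

Lemma dist_edge x y : e x y -> dist x y = 1.
Proof. by rewrite -dist_eq1 => /eqP. Qed.

Lemma dist_edge_bounds p x y :
  e x y -> dist p y <= (dist p x).+1 /\ dist p x <= (dist p y).+1.
Proof.
move=> exy; have := dist_triangle p x y; have := dist_triangle p y x.
have dxy := dist_edge exy; have dyx : dist y x = 1 by rewrite distC.
lia.
Qed.

Lemma dist_pred x y n :
  dist x y = n.+1 -> exists2 w, e w y & dist x w = n.
Proof.
move=> dxy; have := dist_walk_ends x y.
rewrite dxy walk_endsS => /existsP [w /andP [w_end ewy]]; exists w => //.
have := dist_min w_end; have := dist_triangle x w y.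
by rewrite (dist_edge ewy); lia.
Qed.

Lemma dist2 x w y : x != y -> ~~ e x y -> e x w -> e w y -> dist x y = 2.
Proof.
move=> xy nexy exw ewy; have := dist_triangle x w y.
rewrite (dist_edge exw) (dist_edge ewy) -dist_eq0 in xy *.
by rewrite -dist_eq1 in nexy; lia.
Qed.

Definition nbhd x := [set y | e x y].
Definition closer p y := [set u | e y u & (dist p u).+1 == dist p y].
Definition farther p y := [set u | e y u & dist p u == (dist p y).+1].
Definition sphere p i := [set y | dist p y == i].

Lemma closer_sub p y : closer p y \subset nbhd y.
Proof. by apply/subsetP => u; rewrite !inE => /andP []. Qed.

Lemma farther_sub p y : farther p y \subset nbhd y.
Proof. by apply/subsetP => u; rewrite !inE => /andP []. Qed.

Lemma card_sphere0 p : #|sphere p 0| = 1.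
Proof. by rewrite -(cards1 p); apply: eq_card => y; rewrite !inE dist_eq0 eq_sym. Qed.

Section HalfValency.
Variables (k lam mu : nat).
Hypothesis card_nbhd : forall x, #|nbhd x| = k.
Hypothesis card_common_edge : forall x y, e x y -> #|nbhd x :&: nbhd y| = lam.
Hypothesis card_common_dist2 : forall x y, dist x y = 2 -> #|nbhd x :&: nbhd y| = mu.
Hypothesis k_eq : k = mu.*2.+1.
Hypothesis mu_ge2 : 2 <= mu.
Variables x0 z0 : T.
Hypothesis dist_x0z0 : dist x0 z0 = 5.

Lemma card_farther_closer p y : #|farther p y| + #|closer p y| <= k.
Proof.
rewrite -(card_nbhd y); apply: card_disjoint_leq (farther_sub p y) (closer_sub p y) _.
by move=> u; rewrite !inE => /andP [_ /eqP ->]; apply/negP => /andP [_]; lia.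
Qed.

Lemma card_closer_dist2 p y : dist p y = 2 -> #|closer p y| = mu.
Proof.
move=> dpy; rewrite -(card_common_dist2 dpy); apply: eq_card => u.
by rewrite !inE dpy -(dist_eq1 p u) e_sym andbC.
Qed.

Lemma lam_le_mu : lam <= mu.
Proof.
have [a4 _ d4] := dist_pred dist_x0z0; have [w3 _ d3] := dist_pred d4.
have [w2 e23 d2] := dist_pred d3; have [w1 e12 d1] := dist_pred d2.
have ex1 : e x0 w1 by rewrite -dist_eq1 d1.
have d13 : dist w1 w3 = 2.
  have := dist_triangle w1 w2 w3; have := dist_triangle x0 w1 w3.
  by rewrite (dist_edge e12) (dist_edge e23) d1 d3; lia.
have := @card_disjoint_leq _ (x0 |: (nbhd x0 :&: nbhd w1)) (nbhd w1 :&: nbhd w3) (nbhd w1).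
rewrite cardsU1 (card_common_edge ex1) (card_common_dist2 d13) card_nbhd k_eq !inE e_irr /=.
move=> le; suff : 1 + lam + mu <= mu.*2.+1 by lia.
apply: le.
- by apply/subsetP => u; rewrite !inE => /predU1P [->|/andP [_]]; rewrite // e_sym.
- by apply/subsetP => u; rewrite !inE => /andP [].
move=> u; rewrite !inE => /predU1P [->|/andP [ex0u _]]; apply/negP => /andP [_ euw3].
  by move: d3; rewrite distC (dist_edge euw3).
have := dist_triangle x0 u w3.
by rewrite (dist_edge ex0u) (distC u) (dist_edge euw3) d3.
Qed.

(* Double count the edges between [closer p z] and [closer p y :\ z]; the
   degrees on the second side are bounded using lam <= mu. *)
Lemma card_closer_lt p y z : z \in closer p y -> #|closer p z| < #|closer p y|.
Proof.
move=> zy; have := zy; rewrite inE => /andP [eyz /eqP dz].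
set A := closer p z; set B := closer p y :\ z.
have cardB : #|B| = #|closer p y| - 1 by rewrite /B [#|closer p y|](cardsD1 z) zy; lia.
have sumA : \sum_(a in A) #|[set b in B | e a b]| = #|A| * (mu - 1).
  apply: eq_sum_nat_const => w; rewrite inE => /andP [ezw /eqP dw].
  have dwy : dist w y = 2.
    have := dist_triangle w z y; have := dist_triangle p w y.
    by rewrite (distC w z) (dist_edge ezw) (distC z y) (dist_edge eyz); lia.
  have -> : [set b in B | e w b] = (nbhd w :&: nbhd y) :\ z.
    apply/setP => t; rewrite !inE; case: (t =P z) => //= _.
    case ewt: (e w t); rewrite ?andbF //= e_sym; case eyt: (e t y) => //=.
    rewrite e_sym in eyt; have := dist_edge_bounds p ewt; have := dist_edge_bounds p eyt.
    by move=> ? ?; apply/eqP; lia.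
  have := cardsD1 z (nbhd w :&: nbhd y).
  by rewrite (card_common_dist2 dwy) !inE (e_sym w) ezw eyz /=; lia.
have sumB : \sum_(b in B) #|[set a in A | e a b]| <= #|B| * (mu - 1).
  apply: leq_sum_nat_const => t; rewrite !inE => /andP [tz /andP [eyt /eqP dt]].
  have common_tz : #|nbhd t :&: nbhd z| <= mu.
    case etz: (e t z); first by rewrite card_common_edge // lam_le_mu.
    by rewrite card_common_dist2 // (dist2 (w := y)) ?etz // e_sym.
  have y_tz : y \in nbhd t :&: nbhd z by rewrite !inE e_sym eyt e_sym eyz.
  have := cardsD1 y (nbhd t :&: nbhd z); rewrite y_tz.
  suff : #|[set a in A | e a t]| <= #|(nbhd t :&: nbhd z) :\ y| by lia.
  apply: subset_leq_card; apply/subsetP => w; rewrite !inE.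
  move=> /andP [/andP [ezw /eqP dw] ewt]; rewrite (e_sym t w) ewt ezw !andbT.
  by apply/eqP => wy; move: dw; rewrite wy; lia.
have : #|A| * (mu - 1) <= (#|closer p y| - 1) * (mu - 1).
  by rewrite -sumA double_count -cardB.
rewrite leq_pmul2r; last by lia.
suff : 0 < #|closer p y| by lia.
by apply/card_gt0P; exists z.
Qed.

Lemma card_closer_ge p y : 2 <= dist p y -> mu + (dist p y - 2) <= #|closer p y|.
Proof.
move=> /subnKC; move: (dist p y - 2) => n; elim: n y => [|n IH] y dy.
  by rewrite card_closer_dist2 ?addn0 // -dy.
rewrite addnS in dy; have [w ewy dw] := dist_pred (esym dy).
have wy : w \in closer p y by rewrite inE e_sym ewy dw -dy eqxx.
by have := IH w (esym dw); have := card_closer_lt wy; lia.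
Qed.

Lemma card_closer_le p q t :
  dist p q = 5 -> dist t q = 2 -> dist p t = 3 -> #|closer p t| <= mu.+1.
Proof.
move=> dpq dtq dpt.
have := @card_disjoint_leq _ (closer p t) (nbhd t :&: nbhd q) (nbhd t).
rewrite card_nbhd card_common_dist2 // k_eq => le.
suff : #|closer p t| + mu <= mu.*2.+1 by lia.
apply: le; first exact: closer_sub.
  by apply/subsetP => u; rewrite !inE => /andP [].
move=> u; rewrite !inE dpt => /andP [_ /eqP dpu]; apply/negP => /andP [_ equ].
by have := dist_edge_bounds p equ; rewrite dpq; lia.
Qed.

(* Double counting the edges between [closer p s] and the vertices at distance
   2 from both p and s shows that mu divides #|closer p s| * mu.+1. *)
Lemma card_closer_near_antipode p q s :
  dist p q = 5 -> e s q -> dist p s = 4 -> mu.*2 <= #|closer p s|.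
Proof.
move=> dpq esq dps.
have card_closer_t t : t \in closer p s -> #|closer p t| = mu.+1.
  rewrite inE dps => /andP [est /eqP [dpt]].
  have dtq : dist t q = 2.
    have := dist_triangle t s q; have := dist_triangle p t q.
    by rewrite (distC t s) (dist_edge est) (dist_edge esq); lia.
  apply/eqP; rewrite eqn_leq (card_closer_le dpq dtq dpt).
  by have := @card_closer_ge p t; rewrite dpt => /(_ isT); lia.
have := @card_closer_ge p s; rewrite dps => /(_ isT) card_s.
set A := closer p s; set D := [set v | (dist p v == 2) && (dist v s == 2)].
have sumA : \sum_(a in A) #|[set b in D | e a b]| = #|A| * mu.+1.
  apply: eq_sum_nat_const => t tA; rewrite -(card_closer_t t tA).
  move: tA; rewrite inE dps => /andP [est /eqP [dpt]]; apply: eq_card => v.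
  rewrite !inE dpt eqSS; case etv: (e t v); rewrite ?andbF ?andbT //=.
  case: (dist p v =P 2) => //= dpv; apply/eqP.
  have := dist_triangle v t s; have := dist_triangle p v s.
  by rewrite (distC v t) (dist_edge etv) (distC t s) (dist_edge est); lia.
have sumD : \sum_(b in D) #|[set a in A | e a b]| = #|D| * mu.
  apply: eq_sum_nat_const => w; rewrite inE => /andP [/eqP dpw /eqP dws].
  rewrite -(card_common_dist2 dws); apply: eq_card => t; rewrite !inE.
  rewrite (e_sym w t) andbC; case etw: (e t w) => //=; case est: (e s t) => //=.
  have := dist_edge_bounds p etw; have := dist_edge_bounds p est.
  by rewrite dpw dps => ? ?; apply/eqP; lia.
have : mu %| #|A| * mu.+1 by rewrite -sumA double_count sumD dvdn_mull.
rewrite Gauss_dvdl ?coprimenS // => /dvdnP [m cardA].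
by move: card_s; rewrite -/A cardA; case: m {cardA} => [|[|m]]; lia.
Qed.

Lemma lam_eq0 : lam = 0.
Proof.
have dz0x0 : dist z0 x0 = 5 by rewrite distC.
have [u eux0 du] := dist_pred dz0x0; have ex0u : e x0 u by rewrite e_sym.
have := card_closer_near_antipode dz0x0 eux0 du.
have := @card_disjoint_leq _ (x0 |: (nbhd x0 :&: nbhd u)) (closer z0 u) (nbhd u).
rewrite cardsU1 (card_common_edge ex0u) card_nbhd k_eq !inE e_irr /= => le.
suff : 1 + lam + #|closer z0 u| <= mu.*2.+1 by lia.
apply: le; [|exact: closer_sub|].
  by apply/subsetP => w; rewrite !inE => /predU1P [->|/andP [_]]; rewrite // e_sym.
move=> w; rewrite !inE du => /predU1P [->|/andP [ex0w _]];
  apply/negP => /andP [_ /eqP [dw]]; first by move: dw; rewrite dz0x0.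
have := dist_triangle z0 w x0.
by rewrite dz0x0 dw (distC w) (dist_edge ex0w).
Qed.

Lemma triangle_free a b c : e a b -> e b c -> ~~ e a c.
Proof.
move=> eab ebc; apply/negP => eac; have := card_common_edge eac.
rewrite lam_eq0 => /eqP; rewrite cards_eq0 => /eqP abc.
have : b \in nbhd a :&: nbhd c by rewrite !inE eab e_sym ebc.
by rewrite abc inE.
Qed.

Lemma dist_nbr_near_antipode p q s u :
  dist p q = 5 -> dist p s = 4 -> e s q -> e s u -> u != q -> dist p u = 3.
Proof.
move=> dpq dps esq esu uq.
have : (u \in [set q]) || (u \in closer p s).
  apply: (mem_disjoint_cover (S := nbhd s)); rewrite ?inE //.
  - by rewrite sub1set inE.
  - exact: closer_sub.
  - by move=> w; rewrite !inE dps => /eqP ->; rewrite dpq andbF.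
  by rewrite card_nbhd cards1 k_eq; have := card_closer_near_antipode dpq esq dps; lia.
by rewrite !inE (negbTE uq) dps /= => /andP [_ /eqP [->]].
Qed.

Section TwoNeighboursOfAntipode.
Variables p q s s' : T.
Hypotheses (dpq : dist p q = 5) (esq : e s q) (es'q : e s' q) (ss' : s != s').
Hypotheses (dps : dist p s = 4) (dps' : dist p s' = 4).
Local Notation R := ((nbhd s :&: nbhd s') :\ q).

Lemma dist_neighbours_near_antipode : dist s s' = 2.
Proof. by rewrite (dist2 (w := q)) // ?(triangle_free (b := q)) // e_sym. Qed.

Lemma card_common_near_antipode : #|R| = mu - 1.
Proof.
have := cardsD1 q (nbhd s :&: nbhd s').
by rewrite card_common_dist2 ?dist_neighbours_near_antipode // !inE esq es'q /=; lia.
Qed.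

Lemma common_near_antipodeP t : t \in R -> [/\ e s t, e s' t & dist p t = 3].
Proof.
by rewrite !inE => /and3P [tq est es't]; rewrite (dist_nbr_near_antipode dpq dps esq).
Qed.

(* The neighbours shared by v and s, resp. v and s', lie in [closer q v] of
   size <= mu.+1; so these two mu-sets meet in >= mu - 1 = #|R| vertices, and
   their intersection lies in R. *)
Lemma common_near_antipode_sub_nbhd t v :
  t \in R -> e v t -> dist p v = 2 -> R \subset nbhd v.
Proof.
move=> tR evt dpv; have [est _ _] := common_near_antipodeP tR.
have dqp : dist q p = 5 by rewrite distC.
have dvq : dist q v = 3.
  have := dist_triangle v t q; have := dist_triangle t s q; have := dist_triangle p v q.
  rewrite (dist_edge evt) (distC t s) (dist_edge est) (dist_edge esq) dpv dpq distC; lia.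
have dvp : dist v p = 2 by rewrite distC.
have card_q := card_closer_le dqp dvp dvq.
have common_sub a : e a q -> dist p a = 4 -> nbhd a :&: nbhd v \subset closer q v.
  move=> eaq dpa; apply/subsetP => u; rewrite !inE => /andP [eau evu].
  rewrite evu dvq; have := dist_edge_bounds q eau; have := dist_edge_bounds q evu.
  by rewrite (distC q a) (dist_edge eaq) dvq => ? ?; apply/eqP; lia.
have dist_av a : e a t -> dist p a = 4 -> dist a v = 2.
  move=> eat dpa; have := dist_triangle a t v; have := dist_triangle p v a.
  by rewrite (dist_edge eat) (distC t v) (dist_edge evt) dpa dpv (distC v a); lia.
have [_ es't _] := common_near_antipodeP tR.
have cs := card_common_dist2 (dist_av s est dps).
have cs' := card_common_dist2 (dist_av s' es't dps').
have card_U : #|(nbhd s :&: nbhd v) :|: (nbhd s' :&: nbhd v)| <= mu.+1.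
  by apply: leq_trans (subset_leq_card _) card_q; rewrite subUset !common_sub.
have sub_R : (nbhd s :&: nbhd v) :&: (nbhd s' :&: nbhd v) \subset R.
  apply/subsetP => u; rewrite !inE => /andP [/andP [esu evu] /andP [es'u _]].
  rewrite esu es'u !andbT; apply: contraTneq evu => ->.
  by rewrite -dist_eq1 (distC v q) dvq.
have : (nbhd s :&: nbhd v) :&: (nbhd s' :&: nbhd v) == R.
  rewrite eqEcard sub_R card_common_near_antipode.
  by have := cardsUI (nbhd s :&: nbhd v) (nbhd s' :&: nbhd v); rewrite cs cs'; lia.
move/eqP <-; apply/subsetP => u; rewrite !inE => /andP [_ /andP [_]].
by rewrite e_sym.
Qed.

(* If mu >= 3, R holds two vertices t1, t2; the mu.+1 vertices of [closer p t1]
   are common neighbours of t1 and t2, and so are s and s'. *)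
Lemma mu_lt3 : mu < 3.
Proof.
rewrite ltnNge; apply/negP => mu_ge3.
have /card_gt1P [t1 [t2 [t1R t2R t12]]] : 1 < #|R| by rewrite card_common_near_antipode; lia.
have [est1 es't1 dt1] := common_near_antipodeP t1R.
have [est2 es't2 dt2] := common_near_antipodeP t2R.
have d12 : dist t1 t2 = 2 by rewrite (dist2 (w := s)) // ?(triangle_free (b := s)) // e_sym.
have := @card_closer_ge p t1; rewrite dt1 => /(_ isT) card_t1.
have := @card_disjoint_leq _ [set s; s'] (closer p t1) (nbhd t1 :&: nbhd t2).
rewrite cards2 ss' card_common_dist2 // => le.
suff : 2 + #|closer p t1| <= mu by lia.
apply: le.
- apply/subsetP => w; rewrite !inE => /pred2P [] ->.
    by rewrite -!(e_sym s) est1 est2.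
  by rewrite -!(e_sym s') es't1 es't2.
- apply/subsetP => w; rewrite inE dt1 => /andP [et1w /eqP [dw]].
  have ewt1 : e w t1 by rewrite e_sym.
  have := subsetP (common_near_antipode_sub_nbhd t1R ewt1 dw) t2 t2R.
  by rewrite !inE et1w e_sym.
by move=> w; rewrite !inE => /pred2P [] ->; rewrite ?dps ?dps' dt1 andbF.
Qed.

End TwoNeighboursOfAntipode.

Lemma mu_eq2 : mu = 2.
Proof.
have := @card_closer_ge x0 z0; rewrite dist_x0z0 => /(_ isT) card_z0.
have /card_gt1P [s [s' [sz0 s'z0 ss']]] : 1 < #|closer x0 z0| by lia.
move: sz0 s'z0; rewrite !inE dist_x0z0 => /andP [ez0s /eqP [ds]] /andP [ez0s' /eqP [ds']].
rewrite e_sym in ez0s; rewrite e_sym in ez0s'.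
by have := mu_lt3 dist_x0z0 ez0s ez0s' ss' ds ds'; lia.
Qed.

Lemma k_eq5 : k = 5. Proof. by rewrite k_eq mu_eq2. Qed.

Lemma dist_le_card_closer p y : dist p y <= #|closer p y|.
Proof.
case dpy: (dist p y) => [|[|n]] //.
  by apply/card_gt0P; exists p; rewrite inE distxx dpy e_sym -dist_eq1 dpy.
by have := @card_closer_ge p y; rewrite dpy mu_eq2 => /(_ isT); lia.
Qed.

Lemma card_farther_le p y : #|farther p y| <= 5 - dist p y.
Proof.
by have := card_farther_closer p y; have := dist_le_card_closer p y; rewrite k_eq5; lia.
Qed.

Section Antipodal.
Variables p q : T.
Hypothesis dpq : dist p q = 5.

Lemma closer_antipodal_disjoint y :
  dist p y + dist q y = 5 -> {in closer p y, forall u, u \notin closer q y}.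
Proof.
move=> dy u; rewrite !inE => /andP [_ /eqP dpu]; apply/negP => /andP [_ /eqP dqu].
by have := dist_triangle p u q; rewrite (distC u q) dpq; lia.
Qed.

Lemma card_closer_antipodal_le y :
  dist p y + dist q y = 5 -> #|closer p y| + #|closer q y| <= 5.
Proof.
move=> dy; rewrite -k_eq5 -(card_nbhd y).
exact: card_disjoint_leq (closer_sub p y) (closer_sub q y) (closer_antipodal_disjoint dy).
Qed.

(* Each of the two disjoint sets [closer p y], [closer q y] of neighbours of y
   has at least as many elements as its distance, so together they fill all 5
   neighbours of y. *)
Lemma nbr_closer_antipodal y u : dist p y + dist q y = 5 -> e y u ->
  (dist p u).+1 = dist p y \/ (dist q u).+1 = dist q y.
Proof.
move=> dy eyu; have : (u \in closer p y) || (u \in closer q y).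
  apply: (mem_disjoint_cover (closer_sub p y) (closer_sub q y)); last by rewrite inE.
    exact: closer_antipodal_disjoint.
  rewrite card_nbhd k_eq5.
  by have := dist_le_card_closer p y; have := dist_le_card_closer q y; lia.
by rewrite !inE eyu => /orP [] /eqP; [left|right].
Qed.

Lemma dist_add_antipodal y : dist p y + dist q y = 5.
Proof.
move dpy: (dist p y) => n; elim: n y dpy => [|n IH] y dpy.
  by move/eqP: dpy; rewrite dist_eq0 => /eqP <-; rewrite distC dpq.
have [w ewy dpw] := dist_pred dpy.
have dw : dist p w + dist q w = 5 by rewrite dpw; apply: IH.
by case: (nbr_closer_antipodal dw ewy); lia.
Qed.

Lemma card_closer_antipodal y : #|closer p y| = dist p y.
Proof.
have dy := dist_add_antipodal y; have := card_closer_antipodal_le dy.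
by have := dist_le_card_closer p y; have := dist_le_card_closer q y; lia.
Qed.

Lemma card_farther_antipodal y : #|farther p y| = 5 - dist p y.
Proof.
apply/eqP; rewrite eqn_leq card_farther_le /=.
have -> : 5 - dist p y = dist q y by have := dist_add_antipodal y; lia.
apply: leq_trans (dist_le_card_closer q y) (subset_leq_card _).
apply/subsetP => u; rewrite !inE => /andP [-> /eqP dqu] /=.
by have := dist_add_antipodal y; have := dist_add_antipodal u; lia.
Qed.

Lemma dist_nbr_antipodal y u :
  e y u -> dist p u = (dist p y).+1 \/ dist p y = (dist p u).+1.
Proof.
move=> eyu; have := dist_add_antipodal y; have := dist_add_antipodal u.
by case: (nbr_closer_antipodal (dist_add_antipodal y) eyu); lia.
Qed.

End Antipodal.

Hypothesis diam_le5 : forall x y, dist x y <= 5.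

Lemma card_spheres p : #|T| = \sum_(i < 6) #|sphere p i|.
Proof.
rewrite -sum1_card (partition_big (fun y => inord (dist p y) : 'I_6) xpredT) //=.
apply: eq_bigr => i _; rewrite -sum1_card; apply: eq_bigl => y.
by rewrite inE -val_eqE /= inordK // ltnS diam_le5.
Qed.

Lemma sum_card_closer_sphere p i :
  \sum_(y in sphere p i.+1) #|closer p y| = \sum_(w in sphere p i) #|farther p w|.
Proof.
have := double_count (sphere p i.+1) (sphere p i) e.
have -> : \sum_(y in sphere p i.+1) #|[set w in sphere p i | e y w]| =
          \sum_(y in sphere p i.+1) #|closer p y|.
  apply: eq_bigr => y; rewrite inE => /eqP dy; apply: eq_card => w.
  by rewrite !inE dy eqSS andbC.
move=> ->; apply: eq_bigr => w; rewrite inE => /eqP dw; apply: eq_card => y.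
by rewrite !inE dw andbC e_sym.
Qed.

Lemma card_sphereS_le p i : #|sphere p i.+1| * i.+1 <= #|sphere p i| * (5 - i).
Proof.
apply: leq_trans (geq_sum_nat_const _) _ => [y|].
  by rewrite inE => /eqP <-; apply: dist_le_card_closer.
rewrite sum_card_closer_sphere; apply: leq_sum_nat_const => w.
by rewrite inE => /eqP <-; apply: card_farther_le.
Qed.

Lemma card_sphereS_antipodal p q i : dist p q = 5 ->
  #|sphere p i.+1| * i.+1 = #|sphere p i| * (5 - i).
Proof.
move=> dpq; have := sum_card_closer_sphere p i.
rewrite (@eq_sum_nat_const _ _ _ i.+1) => [->|y]; last first.
  by rewrite inE => /eqP <-; apply: (card_closer_antipodal dpq).
by apply: eq_sum_nat_const => y; rewrite inE => /eqP <-; apply: (card_farther_antipodal dpq).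
Qed.

Lemma card_vertices : #|T| = 32.
Proof.
rewrite (card_spheres x0) !big_ord_recr big_ord0 /= card_sphere0.
have := card_sphereS_antipodal 0 dist_x0z0; have := card_sphereS_antipodal 1 dist_x0z0.
have := card_sphereS_antipodal 2 dist_x0z0; have := card_sphereS_antipodal 3 dist_x0z0.
have := card_sphereS_antipodal 4 dist_x0z0; rewrite card_sphere0; lia.
Qed.

(* The inequalities [card_sphereS_le] give #|sphere p i| <= 'C(5, i), and the
   total 32 forces equality everywhere, in particular #|sphere p 5| = 1. *)
Lemma exists_antipode p : exists q, dist p q = 5.
Proof.
have := card_spheres p; rewrite card_vertices !big_ord_recr big_ord0 /= card_sphere0.
have := card_sphereS_le p 0; have := card_sphereS_le p 1; have := card_sphereS_le p 2.
have := card_sphereS_le p 3; have := card_sphereS_le p 4; rewrite card_sphere0 => *.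
have /card_gt0P [q] : 0 < #|sphere p 5| by lia.
by rewrite inE => /eqP; exists q.
Qed.

Lemma card_closer p y : #|closer p y| = dist p y.
Proof. by have [q dpq] := exists_antipode p; apply: card_closer_antipodal dpq y. Qed.

Lemma card_farther p y : #|farther p y| = 5 - dist p y.
Proof. by have [q dpq] := exists_antipode p; apply: card_farther_antipodal dpq y. Qed.

Lemma dist_nbr p y u : e y u -> dist p u = (dist p y).+1 \/ dist p y = (dist p u).+1.
Proof. by have [q dpq] := exists_antipode p; apply: dist_nbr_antipodal dpq y u. Qed.

Definition label y := closer y x0.

Lemma label_sub y : label y \subset nbhd x0.
Proof. exact: closer_sub. Qed.

Lemma card_label y : #|label y| = dist x0 y.
Proof. by rewrite card_closer distC. Qed.

Lemma label_subset y y' : e y y' -> dist x0 y' = (dist x0 y).+1 -> label y \subset label y'.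
Proof.
move=> eyy' dy'; apply/subsetP => u; rewrite !inE => /andP [ex0u /eqP du].
rewrite ex0u /= (distC y' x0) dy'; have := dist_triangle y' y u.
have := dist_triangle y' u x0; rewrite (distC y' y) (dist_edge eyy') (distC u x0).
by rewrite (dist_edge ex0u) (distC y' x0) dy' (distC y x0) in du *; lia.
Qed.

Lemma label_inj_dist2 y y' :
  dist x0 y = 2 -> dist x0 y' = 2 -> label y = label y' -> y = y'.
Proof.
move=> dy dy' lyy'.
have /card_gt1P [u1 [u2 [u1y u2y u12]]] : 1 < #|label y| by rewrite card_label dy.
have label2P z u : dist x0 z = 2 -> u \in label z -> e x0 u /\ e z u.
  move=> dz; rewrite inE (distC z x0) dz => /andP [ex0u /eqP [du]].
  by split => //; rewrite -dist_eq1 du.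
have [ex0u1 eyu1] := label2P _ _ dy u1y; have [ex0u2 eyu2] := label2P _ _ dy u2y.
rewrite lyy' in u1y u2y.
have [_ ey'u1] := label2P _ _ dy' u1y; have [_ ey'u2] := label2P _ _ dy' u2y.
have d12 : dist u1 u2 = 2.
  by rewrite (dist2 (w := x0)) // ?(triangle_free (b := x0)) // e_sym.
have := cardsD1 x0 (nbhd u1 :&: nbhd u2); rewrite card_common_dist2 // mu_eq2.
rewrite !inE -!(e_sym x0) ex0u1 ex0u2 /= => /esym/eqP; rewrite eqSS => /cards1P [a Ua].
have mem_U z : dist x0 z = 2 -> e z u1 -> e z u2 -> z \in (nbhd u1 :&: nbhd u2) :\ x0.
  move=> dz ezu1 ezu2; rewrite !inE -!(e_sym z) ezu1 ezu2 !andbT.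
  by apply/eqP => zx0; move: dz; rewrite zx0 distxx.
have := mem_U _ dy eyu1 eyu2; have := mem_U _ dy' ey'u1 ey'u2.
by rewrite Ua => /set1P -> /set1P.
Qed.

Lemma label_closer_imset n z : {in sphere x0 n &, injective label} ->
  dist x0 z = n.+1 -> label @: closer x0 z = [set label z :\ a | a in label z].
Proof.
move=> label_inj dz; apply: imset_eq_card.
- move=> w w'; rewrite !inE dz => /andP [_ /eqP [dw]] /andP [_ /eqP [dw']].
  by apply: label_inj; rewrite inE ?dw ?dw'.
- apply/subsetP => _ /imsetP [w + ->]; rewrite inE dz => /andP [ezw /eqP [dw]].
  have ewz : e w z by rewrite e_sym.
  have dwz : dist x0 z = (dist x0 w).+1 by rewrite dz dw.
  have [|a aw ->] := subset_cardS (label_subset ewz dwz); first by rewrite !card_label dwz.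
  by apply/imsetP; exists a; rewrite ?setU11 ?setU1K.
by rewrite card_closer -card_label leq_imset_card.
Qed.

(* Two vertices of the sphere n.+1 with the same label have the same lower
   neighbours, n.+1 >= 3 of them, while distinct vertices share at most mu = 2
   neighbours. *)
Lemma label_inj_sphereS n : 2 <= n ->
  {in sphere x0 n &, injective label} -> {in sphere x0 n.+1 &, injective label}.
Proof.
move=> n_ge2 label_inj y y'; rewrite !inE => /eqP dy /eqP dy' lyy'.
have sub : closer x0 y \subset nbhd y :&: nbhd y'.
  apply/subsetP => w wy; rewrite inE (subsetP (closer_sub _ _) _ wy) /=.
  have : label w \in label @: closer x0 y'.
    rewrite (label_closer_imset label_inj dy') -lyy'.
    by rewrite -(label_closer_imset label_inj dy) imset_f.
  case/imsetP => w' w'y' lww'.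
  move: (wy) (w'y'); rewrite !inE dy dy' => /andP [_ /eqP [dw]] /andP [ey'w' /eqP [dw']].
  by rewrite (label_inj w w') ?inE ?dw ?dw'.
apply/eqP; apply: contraT => yy'.
have /card_gt0P [w wy] : 0 < #|closer x0 y| by rewrite card_closer dy.
have /setIP [eyw ey'w] := subsetP sub w wy; rewrite !inE in eyw ey'w.
have nyy' : ~~ e y y' by apply/negP => /(dist_nbr x0); rewrite dy dy'; lia.
have := subset_leq_card sub.
by rewrite card_closer dy card_common_dist2 ?mu_eq2 ?(dist2 (w := w)) // 1?e_sym //; lia.
Qed.

Lemma label_inj_sphere n : {in sphere x0 n &, injective label}.
Proof.
elim: n => [|[|[|n]] IH] y y'; rewrite !inE => /eqP dy /eqP dy' lyy'.
- by move/eqP: dy; move/eqP: dy'; rewrite !dist_eq0 => /eqP <- /eqP <-.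
- have : y \in label y' by rewrite -lyy' inE distxx (distC y x0) dy -dist_eq1 dy.
  by rewrite inE (distC y' x0) dy' => /andP [_ /eqP [/eqP]]; rewrite dist_eq0 => /eqP ->.
- exact: label_inj_dist2.
by apply: (@label_inj_sphereS n.+2); rewrite ?inE ?dy ?dy'.
Qed.

Lemma label_inj : injective label.
Proof.
move=> y y' lyy'; apply: (@label_inj_sphere (dist x0 y)); rewrite ?inE //.
by rewrite -!card_label lyy'.
Qed.

Lemma label_farther_imset z :
  label @: farther x0 z = [set b |: label z | b in nbhd x0 :\: label z].
Proof.
apply: imset_eq_card.
- by move=> w w' _ _; apply: label_inj.
- apply/subsetP => _ /imsetP [w + ->]; rewrite inE => /andP [ezw /eqP dw].
  have [|b bz lw] := subset_cardS (label_subset ezw dw); first by rewrite !card_label dw.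
  have bx0 : b \in nbhd x0 by apply: (subsetP (label_sub w)); rewrite lw setU11.
  by apply/imsetP; exists b; rewrite // inE bz bx0.
rewrite card_farther; apply: leq_trans (leq_imset_card _ _) _.
by rewrite cardsDS ?label_sub // card_nbhd k_eq5 card_label.
Qed.

Lemma adj_label_setU1 y y' : label y \subset label y' -> #|label y' :\: label y| = 1 -> e y y'.
Proof.
move=> sub card1; have card_y' : #|label y'| = #|label y|.+1.
  by move: card1; rewrite cardsDS //; have := subset_leq_card sub; lia.
have [a ay ly'] := subset_cardS sub card_y'.
have ax0 : a \in nbhd x0 by apply: (subsetP (label_sub y')); rewrite ly' setU11.
have : label y' \in label @: farther x0 y.
  by rewrite label_farther_imset ly'; apply/imsetP; exists a; rewrite // inE ay ax0.
by case/imsetP => y'' + /label_inj ->; rewrite inE => /andP [].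
Qed.

Lemma adj_label y y' :
  e y y' = (#|(label y :\: label y') :|: (label y' :\: label y)| == 1).
Proof.
rewrite cardsU_disjoint; last by move=> u; rewrite !in_setD => /andP [_ ->].
apply/idP/idP => [eyy'|].
  have diff1 a b : e a b -> dist x0 b = (dist x0 a).+1 ->
      #|label a :\: label b| + #|label b :\: label a| == 1.
    move=> eab dab; have sub := label_subset eab dab.
    move: (sub); rewrite -setD_eq0 => /eqP ->.
    by rewrite cards0 add0n cardsDS // !card_label dab subSnn.
  case: (dist_nbr x0 eyy') => d_yy'; first exact: diff1.
  by rewrite addnC diff1 // e_sym.
case: (boolP (label y \subset label y')) => [sub|/subsetPn [u uy uy']].
  by move: (sub); rewrite -setD_eq0 => /eqP ->; rewrite cards0 => /eqP; apply: adj_label_setU1.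
case: (boolP (label y' \subset label y)) => [sub|/subsetPn [u' u'y' u'y]].
  move: (sub); rewrite -setD_eq0 => /eqP ->; rewrite cards0 addn0 => /eqP card1.
  by rewrite e_sym; apply: adj_label_setU1.
have : 0 < #|label y :\: label y'| by apply/card_gt0P; exists u; rewrite inE uy uy'.
have : 0 < #|label y' :\: label y| by apply/card_gt0P; exists u'; rewrite inE u'y u'y'.
lia.
Qed.

Lemma graph_iso_cube5 : graph_iso e (@cube_adj 5).
Proof.
rewrite -k_eq5 -(card_nbhd x0).
apply: graph_iso_cube label_sub label_inj _ adj_label.
by rewrite card_nbhd k_eq5 card_vertices.
Qed.

End HalfValency.
End Graph.

Theorem theorem3p5 (T : finType) (e : rel T) (v k lam mu : nat) :
  simple_graph e ->
  connected_graph e ->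
  has_diameter e 5 ->
  amply_regular e v k lam mu ->
  odd k -> 5 <= k -> mu = (k - 1) %/ 2 ->
  graph_iso e (@cube_adj 5).
Proof.
move=> [e_sym e_irr] e_conn [diam [x0 [z0 d_x0z0]]] [_ card_nbhd lamP muP] odd_k k_ge5 mu_k.
have card_common_edge x y : e x y -> #|nbhd e x :&: nbhd e y| = lam.
  by move=> exy; rewrite -(lamP x y exy); apply: eq_card => z; rewrite !inE.
have card_common_dist2 x y : dist e_conn x y = 2 -> #|nbhd e x :&: nbhd e y| = mu.
  move=> dxy; rewrite -(muP x y); last exact/(is_distE e_conn).
  by apply: eq_card => z; rewrite !inE.
have k_mod2 : k %% 2 = 1 by rewrite modn2 odd_k.
have k_eq : k = mu.*2.+1 by rewrite -mul2n mu_k; lia.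
apply: (graph_iso_cube5 e_sym e_irr card_nbhd card_common_edge card_common_dist2 k_eq).
- by rewrite mu_k; lia.
- by apply/is_distE; apply: d_x0z0.
by move=> x y; apply: diam; apply/is_distE.
Qed.
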